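(* Let $Q$ be an $n\times n$ real symmetric matrix, let $\Delta_n := \{x \in \mathbb{R}^n : x \ge 0,\ \sum_{j=1}^n x_j = 1\}$, and let $\nu(Q) := \min_{x \in \Delta_n} x^TQx$. For $x \in \Delta_n$ let $\mathcal{P}(x) = \{j : x_j > 0\}$, and let $e_j$ denote the $j$-th unit vector of $\mathbb{R}^n$. Then \[ \nu(Q) = \min_{x \in \Delta_n} \max_{j \in \mathcal{P}(x)} e_j^T Q x . \] *)

From mathcomp Require Import all_boot all_order all_algebra.
From mathcomp Require Import reals.
Set Implicit Arguments. Unset Strict Implicit. Unset Printing Implicit Defensive.
Import Order.TTheory GRing.Theory Num.Theory.
Local Open Scope ring_scope.

Definition in_simplex (R : realType) (n : nat) (x : 'cV[R]_n) : Prop :=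
  (forall j : 'I_n, 0 <= x j 0) /\ \sum_(j < n) x j 0 = 1.

Definition qform (R : realType) (n : nat) (Q : 'M[R]_n) (x : 'cV[R]_n) : R :=
  (x^T *m Q *m x) 0 0.

Definition ejQx (R : realType) (n : nat) (Q : 'M[R]_n) (x : 'cV[R]_n) (j : 'I_n) : R :=
  (Q *m x) j 0.

Definition is_support_max (R : realType) (n : nat) (Q : 'M[R]_n) (x : 'cV[R]_n) (v : R) : Prop :=
  (exists j : 'I_n, 0 < x j 0 /\ ejQx Q x j = v) /\
  (forall j : 'I_n, 0 < x j 0 -> ejQx Q x j <= v).

Definition is_min_on_simplex (R : realType) (n : nat) (f : 'cV[R]_n -> R) (m : R) : Prop :=
  (exists x, in_simplex x /\ f x = m) /\ (forall x, in_simplex x -> m <= f x).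

From mathcomp Require Import all_boot all_order all_algebra.
From mathcomp Require Import reals.
From mathcomp Require Import boolp classical_sets topology normedtype derive.
From mathcomp Require Import ring lra.
Set Implicit Arguments. Unset Strict Implicit. Unset Printing Implicit Defensive.
Import Order.TTheory GRing.Theory Num.Theory.
Import numFieldTopology.Exports numFieldNormedType.Exports.
Local Open Scope ring_scope.

(* Let x minimise x^T Q x over the simplex (it exists by compactness) and let
   nu be the minimum.  Moving from x towards a vertex, along x + t (e_k - x),
   changes the form by 2 t ((Qx)_k - nu) + O(t^2), so (Qx)_k >= nu for every k.
   As nu = x^T Q x = sum_j x_j (Qx)_j is an average of the (Qx)_j over the
   support of x, they all equal nu there: the support maximum at x is nu.
   Conversely, for every y in the simplex, y^T Q y is such an average over the
   support of y, so nu <= y^T Q y is bounded by the support maximum at y. *)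

Lemma ge0_of_perturbation_ge0 (R : realFieldType) (a b : R) :
  (forall t, 0 < t <= 1 -> 0 <= a + t * b) -> 0 <= a.
Proof.
move=> abP; rewrite leNgt; apply/negP => a_lt0.
have b1_gt0 : 0 < `|b| + 1 by rewrite ltr_wpDl.
pose t := Num.min 1 (- a / (`|b| + 1)).
have t_gt0 : 0 < t by rewrite lt_min ltr01 divr_gt0 // oppr_gt0.
have tb_le : t * (`|b| + 1) <= - a by rewrite -ler_pdivlMr // ge_min lexx orbT.
have : t * b <= t * `|b| by rewrite ler_pM2l // ler_norm.
have := abP t; rewrite t_gt0 ge_min lexx => /(_ isT); nra.
Qed.

Section simplex.
Variables (R : realType) (n : nat).
Implicit Types (x y : 'cV[R]_n) (c : 'I_n -> R).

Lemma in_simplex_delta (k : 'I_n) : in_simplex (delta_mx k 0 : 'cV[R]_n).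
Proof.
split=> [j|]; first by rewrite mxE.
rewrite (bigD1 k) //= big1 => [|j /negbTE jk]; by rewrite mxE ?eqxx ?jk ?addr0.
Qed.

Lemma in_simplex_segment x y t : in_simplex x -> in_simplex y -> 0 <= t <= 1 ->
  in_simplex (x + t *: (y - x)).
Proof.
move=> [x_ge0 x_sum] [y_ge0 y_sum] /andP[t_ge0 t_le1]; split=> [j|].
  have := x_ge0 j; have := y_ge0 j; rewrite !mxE; nra.
under eq_bigr do rewrite !mxE.
rewrite big_split /= -mulr_sumr big_split /= sumrN x_sum y_sum.
by rewrite subrr mulr0 addr0.
Qed.

Lemma simplex_le1 x j : in_simplex x -> x j 0 <= 1.
Proof.
move=> [x_ge0 <-]; rewrite (bigD1 j) //= lerDl.
by apply: sumr_ge0 => i _; exact: x_ge0.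
Qed.

Lemma simplex_support x : in_simplex x -> exists j, 0 < x j 0.
Proof.
move=> [x_ge0 x_sum]; apply/existsP; apply: contraT => /existsPn x_le0.
have : \sum_j x j 0 = 0.
  by apply: big1 => j _; apply/le_anti; rewrite x_ge0 andbT leNgt x_le0.
by rewrite x_sum => /eqP; rewrite oner_eq0.
Qed.

Lemma simplex_avg_le x c v : in_simplex x -> (forall j, 0 < x j 0 -> c j <= v) ->
  \sum_j x j 0 * c j <= v.
Proof.
move=> [x_ge0 x_sum] c_le; rewrite -[leRHS]mul1r -x_sum mulr_suml.
apply: ler_sum => j _; have [x_gt0|x_le0] := ltP 0 (x j 0).
  by rewrite ler_pM2l // c_le.
have -> : x j 0 = 0 by apply/le_anti; rewrite x_le0 x_ge0.
by rewrite !mul0r.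
Qed.

Lemma simplex_avg_eq_min x c m : in_simplex x -> (forall j, m <= c j) ->
  \sum_j x j 0 * c j = m -> forall j, 0 < x j 0 -> c j = m.
Proof.
move=> [x_ge0 x_sum] c_ge avg_m j x_gt0.
have terms_ge0 i : 0 <= x i 0 * (c i - m) by rewrite mulr_ge0 ?subr_ge0.
have : \sum_i x i 0 * (c i - m) = 0.
  under eq_bigr do rewrite mulrBr.
  by rewrite sumrB avg_m -mulr_suml x_sum mul1r subrr.
move=> /eqP; rewrite psumr_eq0 // => /allP /(_ j (mem_index_enum j)).
by rewrite mulf_eq0 gt_eqF //= subr_eq0 => /eqP.
Qed.

Lemma compact_simplex : compact [set v : 'rV[R]_n | in_simplex v^T]%classic.
Proof.
have -> : [set v : 'rV[R]_n | in_simplex v^T]%classic =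
    ([set v | forall i, `[0, 1]%classic (v ord0 i)] `&`
     (fun v => \sum_i v ord0 i) @^-1` [set 1])%classic.
  apply/seteqP; split=> v.
    move=> v_simplex; split=> [i|] /=.
      have := simplex_le1 i v_simplex; have := v_simplex.1 i.
      by rewrite in_itv /= !mxE => -> ->.
    by rewrite /= -v_simplex.2; apply: eq_bigr => i _; rewrite mxE.
  move=> [/= v_box v_sum]; split=> [j|].
    by have := v_box j; rewrite in_itv mxE => /andP[].
  by under eq_bigr do rewrite mxE.
apply: compact_closedI.
  apply: (@rV_compact R n (fun=> `[0, 1]%classic)) => _; exact: segment_compact.
apply: preimage_closed; last exact: closed_eq.
move=> v _; apply: (continuous_big add_continuous) => i _.
exact: coord_continuous.
Qed.

End simplex.

Section quadratic_form.
Variables (R : realType) (n : nat) (Q : 'M[R]_n).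
Implicit Types (x y d : 'cV[R]_n).

Lemma qformE x : qform Q x = \sum_j x j 0 * ejQx Q x j.
Proof.
by rewrite /qform /ejQx -mulmxA mxE; apply: eq_bigr => j _; rewrite mxE.
Qed.

Lemma qform_le_support_max x v : in_simplex x -> is_support_max Q x v ->
  qform Q x <= v.
Proof. by move=> x_simplex [_ v_ge]; rewrite qformE; exact: simplex_avg_le. Qed.

Lemma continuous_qform_trmx : continuous (fun v : 'rV[R]_n => qform Q v^T).
Proof.
have -> : (fun v : 'rV[R]_n => qform Q v^T) =
    (fun v => \sum_j v ord0 j * \sum_i Q j i * v ord0 i).
  apply: funext => v; rewrite qformE; apply: eq_bigr => j _.
  by rewrite /ejQx !mxE; congr (_ * _); apply: eq_bigr => i _; rewrite mxE.
have coordP i : continuous (fun v : 'rV[R]_n => v ord0 i).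
  exact: coord_continuous.
apply: (continuous_big add_continuous) => j _ v.
apply: continuousM; first exact: coordP.
apply: (continuous_big add_continuous) => i _ w.
apply: continuousM; [exact: cst_continuous | exact: coordP].
Qed.

Lemma exists_qform_min : (0 < n)%N ->
  exists2 x, in_simplex x & forall y, in_simplex y -> qform Q x <= qform Q y.
Proof.
move=> n_gt0.
have simplex0 : ([set v : 'rV[R]_n | in_simplex v^T] !=set0)%classic.
  exists (delta_mx (Ordinal n_gt0) 0)^T.
  by rewrite /= trmxK; exact: in_simplex_delta.
have [v] := compact_EVT_min simplex0 (@compact_simplex R n)
  (continuous_subspaceT continuous_qform_trmx).
rewrite inE => v_simplex v_min; exists v^T => // y y_simplex.
by rewrite -[y]trmxK; apply: v_min; rewrite inE /= trmxK.
Qed.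

Lemma trmx_delta_mulmx_ejQx x k :
  ((delta_mx k (0 : 'I_1))^T *m Q *m x) 0 0 = ejQx Q x k.
Proof. by rewrite trmx_delta -mulmxA -rowE mxE. Qed.

Hypothesis Q_sym : Q^T = Q.

Lemma bilin_sym x y : (x^T *m Q *m y) 0 0 = (y^T *m Q *m x) 0 0.
Proof.
have -> : (y^T *m Q *m x) 0 0 = (y^T *m Q *m x)^T 0 0 by rewrite [RHS]mxE.
by rewrite !trmx_mul trmxK Q_sym mulmxA.
Qed.

Lemma qformDZ x d t :
  qform Q (x + t *: d) =
    qform Q x + 2 * t * (d^T *m Q *m x) 0 0 + t ^+ 2 * qform Q d.
Proof.
rewrite /qform.
have -> : (x + t *: d)^T = x^T + t *: d^T by rewrite linearD linearZ.
rewrite !mulmxDl !mulmxDr -!scalemxAl -!scalemxAr.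
move: (bilin_sym x d).
set xQx := x^T *m Q *m x; set xQd := x^T *m Q *m d.
set dQx := d^T *m Q *m x; set dQd := d^T *m Q *m d.
clearbody xQx xQd dQx dQd; rewrite !mxE => ->; ring.
Qed.

Section minimizer.
Variable x : 'cV[R]_n.
Hypotheses (x_simplex : in_simplex x)
  (x_min : forall y, in_simplex y -> qform Q x <= qform Q y).

Lemma qform_min_le_ejQx k : qform Q x <= ejQx Q x k.
Proof.
rewrite -subr_ge0 -(pmulr_rge0 _ (ltr0Sn R 1)).
set d := delta_mx k (0 : 'I_1) - x.
have d_qform : (d^T *m Q *m x) 0 0 = ejQx Q x k - qform Q x.
  rewrite /d linearB /= !mulmxBl [LHS]mxE [X in _ + X]mxE.
  by rewrite trmx_delta_mulmx_ejQx.
apply: (@ge0_of_perturbation_ge0 R _ (qform Q d)) => t /andP[t_gt0 t_le1].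
have t_unit : 0 <= t <= 1 by rewrite ltW.
have := x_min (in_simplex_segment x_simplex (in_simplex_delta R k) t_unit).
rewrite -/d qformDZ d_qform; nra.
Qed.

Lemma is_support_max_qform_min : is_support_max Q x (qform Q x).
Proof.
have ejQx_eq := simplex_avg_eq_min x_simplex qform_min_le_ejQx (esym (qformE x)).
have [j x_j_gt0] := simplex_support x_simplex.
split; first by exists j; split; last exact: ejQx_eq.
by move=> k /ejQx_eq ->.
Qed.

End minimizer.
End quadratic_form.

Theorem proposition1 (R : realType) (n : nat) (Q : 'M[R]_n)
    (hn : (0 < n)%N) (hQ : Q^T = Q) :
  exists nu : R,
    is_min_on_simplex (qform Q) nu /\
    (exists x : 'cV[R]_n, in_simplex x /\ is_support_max Q x nu) /\
    (forall (x : 'cV[R]_n) (v : R), in_simplex x -> is_support_max Q x v -> nu <= v).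
Proof.
have [x x_simplex x_min] := exists_qform_min Q hn.
exists (qform Q x); split; first by split; [exists x | exact: x_min].
split; first by exists x; split; last exact: is_support_max_qform_min.
move=> y v y_simplex y_max.
exact: le_trans (x_min y y_simplex) (qform_le_support_max y_simplex y_max).
Qed.
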